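(* Let $k$ be an algebraically closed field of characteristic $p\ge5$. The singular set of $R^p$ in $\mathbf{A}^3_k$, i.e. the algebraic set defined by the ideal $\langle R^p(e_2),R^p(e_4),R^p(e_6)\rangle\subset k[e_2,e_4,e_6]$, equals $\{e_4^3-e_6^2=0\}$.
   Context: $R = \frac{e_2^2-e_4}{12}\frac{\partial}{\partial e_2} + \frac{e_2e_4-e_6}{3}\frac{\partial}{\partial e_4} + \frac{e_2e_6-e_4^2}{2}\frac{\partial}{\partial e_6}$ is the Ramanujan vector field on $\mathbf{A}^3_k$ with coordinates $(e_2,e_4,e_6)$, and $R^p$ is its $p$-fold composite as a derivation of $k[e_2,e_4,e_6]$. *)

From HB Require Import structures.
From mathcomp Require Import all_boot all_order all_algebra.
From mathcomp Require Import mpoly.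
Set Implicit Arguments. Unset Strict Implicit. Unset Printing Implicit Defensive.
Import GRing.Theory.
Local Open Scope ring_scope.

Definition i2 : 'I_3 := @Ordinal 3 0 isT.
Definition i4 : 'I_3 := @Ordinal 3 1 isT.
Definition i6 : 'I_3 := @Ordinal 3 2 isT.

Section Ramanujan.
Variable k : fieldType.

Definition e2 : {mpoly k[3]} := 'X_i2.
Definition e4 : {mpoly k[3]} := 'X_i4.
Definition e6 : {mpoly k[3]} := 'X_i6.

Definition ramanujan (f : {mpoly k[3]}) : {mpoly k[3]} :=
    ((12%:R)^-1 *: (e2 ^+ 2 - e4)) * f^`M(i2)
  + ((3%:R)^-1 *: (e2 * e4 - e6)) * f^`M(i4)
  + ((2%:R)^-1 *: (e2 * e6 - e4 ^+ 2)) * f^`M(i6).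

Definition ramanujan_pow (p : nat) (f : {mpoly k[3]}) : {mpoly k[3]} :=
  iter p ramanujan f.

End Ramanujan.

From HB Require Import structures.
From mathcomp Require Import all_boot all_order all_algebra.
From mathcomp Require Import mpoly.
From mathcomp Require Import ring zify.
Import GRing.Theory.
Local Open Scope ring_scope.

(* Write R = 12^-1 R12, where R12 has integral coefficients.  In characteristic
   p the iterate R12^p is again a derivation, so R12^p = sum_i E_i d/de_i with
   E_i := R12^p e_i, and the singular set is the zero set of I := (E_2, E_4, E_6).

   On the cusp Delta := e4^3 - e6^2 = 0, parametrized by e2 = s + t, e4 = t^2,
   e6 = t^3, the field R12 becomes s^2 d/ds + 2ts d/dt, which maps t^j s^m to
   (2j + m) t^j s^(m+1); a product of p consecutive integers is divisible by p,
   so every E_i vanishes on the cusp.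

   Conversely, d/de2 and the weighted Euler field H satisfy [d/de2, R12] = H and
   [H, R12] = 2 R12, so d/de2 commutes with R12^p and I is stable under R12,
   d/de2 and H.  These three fields span all derivations once Delta is
   inverted, hence Delta^N d^m E_2 lies in I for every multi-index m.  Since
   E_2 is nonzero, weighted homogeneous of weight p + 1 and killed by d/de2,
   every exponent of its leading monomial a is < p, so d^a E_2 is a nonzero
   constant and Delta vanishes on the zero set of I. *)

Lemma prime_ndvd_fact p k : prime p -> (k < p)%N -> ~~ (p %| k`!)%N.
Proof.
move=> p_pr; elim: k => [|k IH] k_lt.
  by rewrite fact0 dvdn1; apply: contraTneq (prime_gt1 p_pr) => ->.
by rewrite factS Euclid_dvdM // negb_or IH ?(ltnW k_lt) // gtnNdvd.
Qed.

Lemma dvdn_prod_consecutive p a : (0 < p)%N -> (p %| \prod_(i < p) (a + i))%N.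
Proof.
move=> p_gt0; have i_lt : ((p - a %% p) %% p < p)%N by rewrite ltn_mod.
rewrite (bigD1 (Ordinal i_lt)) //= dvdn_mulr //.
by rewrite /dvdn modnDmr -modnDml subnKC ?modnn // ltnW // ltn_pmod.
Qed.

(** * Iterated derivations *)

Section IterAdditive.
Variables (V : zmodType) (n : nat) (f : {additive V -> V}).

Lemma iter_is_zmod_morphism : zmod_morphism (iter n f).
Proof. by elim: n => [|m IH] x y //=; rewrite IH raddfB. Qed.

HB.instance Definition _ :=
  GRing.isZmodMorphism.Build V V (iter n f) iter_is_zmod_morphism.

End IterAdditive.

Section IteratedCommutator.
Variables (V : zmodType) (B : {additive V -> V}) (A C : V -> V) (m : nat).
Hypothesis AB : forall v, A (B v) = B (A v) + C v.
Hypothesis CB : forall v, C (B v) = B (C v) + B v *+ m.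

Lemma iter_commutator n v :
  A (iter n.+1 B v) =
  iter n.+1 B (A v) + iter n B (C v) *+ n.+1 + iter n B v *+ (m * 'C(n.+1, 2)).
Proof.
elim: n v => [|n IH] v; first by rewrite /= bin_small // muln0 !mulr0n addr0.
have -> : (m * 'C(n.+2, 2) = m * 'C(n.+1, 2) + m * n.+1)%N.
  by rewrite binS bin1 mulnDr addnC.
rewrite iterSr IH AB CB !raddfD !raddfMn /= -!iterSr -!iterS.
set a := iter n.+2 B (A v); set b := iter n.+1 B (C v); set c := iter n.+1 B v.
rewrite mulrnDl -mulrnA (mulrSr b n.+1).
by rewrite -!addrA; congr (_ + _); rewrite addrCA [c *+ _ + _]addrC.
Qed.

Lemma pchar_iter_commute p v :
  prime p -> (2 < p)%N -> (forall w : V, w *+ p = 0) ->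
  A (iter p B v) = iter p B (A v).
Proof.
move=> p_pr p_gt2 pV; have p_gt0 := prime_gt0 p_pr.
have /dvdnP[q Cq] : (p %| 'C(p, 2))%N by rewrite prime_dvd_bin.
by rewrite -(prednK p_gt0) iter_commutator prednK // Cq mulnA mulrnA !pV !addr0.
Qed.

End IteratedCommutator.

Section IteratedDerivation.
Variables (R : comNzRingType) (D : {additive R -> R}).
Hypothesis DM : forall x y, D (x * y) = D x * y + x * D y.

Lemma iter_derivationM n x y :
  iter n D (x * y) = \sum_(i < n.+1) (iter i D x * iter (n - i) D y) *+ 'C(n, i).
Proof.
elim: n => [|n IH]; first by rewrite big_ord1.
rewrite iterS IH raddf_sum /=.
under eq_bigr do rewrite raddfMn DM -!iterS mulrnDl.
rewrite big_split /= [in RHS]big_ord_recl [X in _ + X = _]big_ord_recl /=.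
rewrite !bin0 subn0 addrCA; congr (_ + _).
under [in RHS]eq_bigr do rewrite /bump /= add1n subSS binS mulrnDr.
rewrite big_split /= [RHS]addrC [X in _ = _ + X]big_ord_recr /= bin_small // mulr0n addr0.
congr (_ + _); apply: eq_bigr => i _.
by rewrite /bump /= add1n -[D (iter _ D y)]iterS subnSK.
Qed.

Lemma pchar_iter_derivationM p x y : p \in [pchar R] ->
  iter p D (x * y) = iter p D x * y + x * iter p D y.
Proof.
move=> pcharRp; have p_pr := pcharf_prime pcharRp; have p_gt0 := prime_gt0 p_pr.
rewrite iter_derivationM big_ord_recr /= subnn binn mulr1n.
rewrite (bigD1 (Ordinal p_gt0)) //= subn0 bin0 mulr1n big1 ?addr0 1?addrC // => i.
rewrite -val_eqE /= -lt0n => i_gt0.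
have /dvdnP[q ->] : (p %| 'C(p, i))%N by rewrite prime_dvd_bin // i_gt0 ltn_ord.
by rewrite mulrnA mulrn_pchar // mul0rn.
Qed.

End IteratedDerivation.

(** * Ideals and derivations of polynomial rings *)

Definition in_ideal3 {R : comPzRingType} (a b c f : R) : Prop :=
  exists u v w, f = u * a + v * b + w * c.

Section IdealOfThree.
Context {R : comPzRingType} {a b c : R}.
Local Notation in_ideal3 := (in_ideal3 a b c).

Lemma in_ideal3_gen : [/\ in_ideal3 a, in_ideal3 b & in_ideal3 c].
Proof.
by split; [exists 1, 0, 0 | exists 0, 1, 0 | exists 0, 0, 1];
  rewrite !mul0r ?add0r ?addr0 mul1r.
Qed.

Lemma in_ideal3_0 : in_ideal3 0.
Proof. by exists 0, 0, 0; rewrite !mul0r !addr0. Qed.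

Lemma in_ideal3D f g : in_ideal3 f -> in_ideal3 g -> in_ideal3 (f + g).
Proof.
move=> [u [v [w ->]]] [u' [v' [w' ->]]].
by exists (u + u'), (v + v'), (w + w'); ring.
Qed.

Lemma in_ideal3Ml g f : in_ideal3 f -> in_ideal3 (g * f).
Proof. by move=> [u [v [w ->]]]; exists (g * u), (g * v), (g * w); ring. Qed.

Lemma in_ideal3Mn f n : in_ideal3 f -> in_ideal3 (f *+ n).
Proof. by rewrite -mulr_natl; apply: in_ideal3Ml. Qed.

Lemma in_ideal3B f g : in_ideal3 f -> in_ideal3 g -> in_ideal3 (f - g).
Proof. by move=> If /(in_ideal3Ml (-1)); rewrite mulN1r; apply: in_ideal3D. Qed.

Lemma in_ideal3_derivation (D : {additive R -> R}) f :
  (forall x y, D (x * y) = D x * y + x * D y) ->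
  in_ideal3 (D a) -> in_ideal3 (D b) -> in_ideal3 (D c) ->
  in_ideal3 f -> in_ideal3 (D f).
Proof.
move=> DM Ia Ib Ic [u [v [w ->]]]; rewrite !raddfD /= !DM.
have Igen x y : in_ideal3 y -> in_ideal3 (D y) -> in_ideal3 (D x * y + x * D y).
  by move=> Iy IDy; apply: in_ideal3D; apply: in_ideal3Ml.
have [Ia' Ib' Ic'] := in_ideal3_gen.
by apply: in_ideal3D; [apply: in_ideal3D|]; apply: Igen.
Qed.

Lemma in_ideal3_rmorph_eq0 {S : pzRingType} (phi : {rmorphism R -> S}) {f} :
  phi a = 0 -> phi b = 0 -> phi c = 0 -> in_ideal3 f -> phi f = 0.
Proof.
by move=> pa pb pc [u [v [w ->]]]; rewrite !rmorphD !rmorphM pa pb pc !mulr0 !addr0.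
Qed.

End IdealOfThree.

Lemma mpoly_ind_ring n (R : nzRingType) (P : {mpoly R[n]} -> Prop) :
  (forall c, P c%:MP) -> (forall i, P 'X_i) ->
  (forall f g, P f -> P g -> P (f + g)) -> (forall f g, P f -> P g -> P (f * g)) ->
  forall f, P f.
Proof.
move=> PC PX PD PM; have P1 : P 1 by rewrite -mpolyC1.
have PXn i k : P ('X_i ^+ k) by elim: k => [|k IH]; rewrite ?expr0 ?exprS; auto.
elim/mpolyind => [|c m f _ _ Pf]; first by rewrite -mpolyC0.
apply: (PD _ _ _ Pf); rewrite -mul_mpolyC mpolyXE_id; apply: (PM) => //.
by apply: big_rec => // i g _; apply: PM.
Qed.

Lemma mderivXU1 n (R : nzRingType) (i : 'I_n) : ('X_i : {mpoly R[n]})^`M(i) = 1.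
Proof.
rewrite mderivX mnm1E eqxx scale1r.
have -> : (U_(i) - U_(i))%MM = 0%MM :> 'X_{1..n}.
  by apply/mnmP => l; rewrite !mnmE subnn.
by rewrite mpolyX0.
Qed.

Lemma mderivXU0 n (R : nzRingType) (i j : 'I_n) :
  j != i -> ('X_j : {mpoly R[n]})^`M(i) = 0.
Proof. by move=> /negPf ji; rewrite mderivX mnm1E ji scale0r. Qed.

Lemma derivation_mpolyE n (R : comNzRingType)
    (D : {additive {mpoly R[n]} -> {mpoly R[n]}}) :
  (forall f g, D (f * g) = D f * g + f * D g) -> (forall c, D c%:MP = 0) ->
  forall f, D f = \sum_i f^`M(i) * D 'X_i.
Proof.
move=> DM DC; elim/mpoly_ind_ring => [c|j|f g Df Dg|f g Df Dg].
- by rewrite DC big1 // => i _; rewrite mderivC mul0r.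
- rewrite (bigD1 j) //= mderivXU1 mul1r big1 ?addr0 // => i ne_ij.
  by rewrite mderivXU0 1?eq_sym // mul0r.
- by rewrite raddfD Df Dg -big_split; apply: eq_bigr => i _; rewrite mderivD mulrDl.
- rewrite DM Df Dg mulr_suml mulr_sumr -big_split; apply: eq_bigr => i _.
  by rewrite mderivM /=; ring.
Qed.

Lemma mderivm_mlead n (R : nzRingType) (f : {mpoly R[n]}) :
  f^`M[mlead f] = (f@_(mlead f) *+ \prod_(i < n) (mlead f i)`!)%:MP.
Proof.
apply/mpolyP => m; rewrite mcoeff_mderivm mcoeffC.
have [->|m_neq0] := eqVneq m 0%MM.
  by rewrite addm0 mulr1; under eq_bigr do rewrite ffactnn.
rewrite mulr0 mcoeff_gt_mlead ?mul0rn //.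
have := ltmc_add2r (mlead f) 0%MM m; rewrite addm0 => ->.
rewrite Order.POrderTheory.lt_neqAle eq_sym m_neq0 /=.
by have := lemc_addl m 0%MM; rewrite addm0.
Qed.

Lemma pchar_dvdn_mderiv_eq0 {n} {R : idomainType} {p} {f : {mpoly R[n]}} {i m} :
  p \in [pchar R] -> f^`M(i) = 0 -> m \in msupp f -> (p %| m i)%N.
Proof.
move=> pcharRp fi0 m_supp; have [->|mi_gt0] := posnP (m i); first exact: dvdn0.
have mE : m = ((m - U_(i)) + U_(i))%MM.
  apply/mnmP => j; rewrite !mnmE; case: eqP => [<-|_] /=; last by rewrite addn0 subn0.
  by rewrite addn1 subn1 prednK.
have := congr1 (mcoeff (m - U_(i))) fi0.
rewrite mcoeff_mderiv -mE mcoeff0 mnmBE mnm1E eqxx subn1 prednK // => /eqP.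
rewrite -mulr_natr mulf_eq0 -(dvdn_pcharf pcharRp) orbC => /orP[] // /eqP fm0.
by move: m_supp; rewrite mcoeff_msupp fm0 eqxx.
Qed.

Lemma pchar_mleadc_fact_neq0 {n} {R : idomainType} {p} {f : {mpoly R[n]}} :
  p \in [pchar R] -> f != 0 -> (forall i, (mlead f i < p)%N) ->
  f@_(mlead f) *+ \prod_(i < n) (mlead f i)`! != 0.
Proof.
move=> pcharRp f_neq0 lead_lt; rewrite -mulr_natr mulf_neq0 ?mleadc_eq0 //.
rewrite -(dvdn_pcharf pcharRp) Euclid_dvd_prod ?(pcharf_prime pcharRp) //.
by rewrite big_has; apply/hasPn => i _; apply: prime_ndvd_fact (pcharf_prime pcharRp) _.
Qed.

Lemma dhomogM_mderiv n (R : nzRingType) (mf : measure n) d e i (f g : {mpoly R[n]}) :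
  g \is (e + mf U_(i)%MM)%N.-homog for mf -> f \is d.-homog for mf ->
  g * f^`M(i) \is (e + d)%N.-homog for mf.
Proof.
move=> g_homog /dhomogP f_homog.
have [d_lt|d_ge] := ltnP d (mf U_(i)%MM).
  suff -> : f^`M(i) = 0 by rewrite mulr0 dhomog0.
  apply/mpolyP => m; rewrite mcoeff_mderiv mcoeff0.
  case: (boolP ((m + U_(i))%MM \in msupp f)) => [/f_homog|]; last first.
    by rewrite mcoeff_msupp negbK => /eqP ->; rewrite mul0rn.
  by rewrite mfD => mE; move: d_lt; rewrite -mE ltnNge leq_addl.
rewrite -(subnKC d_ge) addnA; apply: dhomogM g_homog _.
apply/dhomogP => m; rewrite mcoeff_msupp mcoeff_mderiv => fm_neq0.
have /f_homog : (m + U_(i))%MM \in msupp f.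
  by rewrite mcoeff_msupp; apply: contra_neq fm_neq0 => ->; rewrite mul0rn.
by rewrite mfD => <-; rewrite addnK.
Qed.

Lemma mderiv_exp n (R : comNzRingType) (g : {mpoly R[n]}) i N :
  (g ^+ N)^`M(i) = g^`M(i) * g ^+ N.-1 *+ N.
Proof.
elim: N => [|[|N] IH]; first by rewrite expr0 -mpolyC1 mderivC mulr0n.
  by rewrite expr1 expr0 mulr1.
by rewrite exprS mderivM IH /= exprS; ring.
Qed.

Lemma mulr_mderiv_exp n (R : comNzRingType) (g : {mpoly R[n]}) i N :
  g * (g ^+ N)^`M(i) = g^`M(i) * g ^+ N *+ N.
Proof.
by case: N => [|N]; rewrite mderiv_exp ?mulr0n ?mulr0 //= exprS; ring.
Qed.

(** * The Ramanujan vector field *)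

Lemma ord3P (i : 'I_3) : [\/ i = i2, i = i4 | i = i6].
Proof.
by case: i => [[|[|[|//]]] ?]; [apply: Or31 | apply: Or32 | apply: Or33]; apply: val_inj.
Qed.

Lemma big_ord3 (R : Type) (idx : R) (op : Monoid.law idx) (F : 'I_3 -> R) :
  \big[op/idx]_(i < 3) F i = op (op (F i2) (F i4)) (F i6).
Proof.
rewrite !big_ord_recl big_ord0 Monoid.mulm1 Monoid.mulmA.
by congr (op (op (F _) (F _)) (F _)); apply: val_inj.
Qed.

Lemma mnmwgt3 (m : 'X_{1..3}) : mnmwgt m = (m i2 + m i4 * 2 + m i6 * 3)%N.
Proof. by rewrite /mnmwgt big_ord3 /= muln1. Qed.

Section Ramanujan12.
Variable k : fieldType.
Local Notation P := {mpoly k[3]}.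

Definition ramanujan12 (f : P) : P :=
  (e2 k ^+ 2 - e4 k) * f^`M(i2) + ((e2 k * e4 k - e6 k) * f^`M(i4)) *+ 4
  + ((e2 k * e6 k - e4 k ^+ 2) * f^`M(i6)) *+ 6.

Definition weighted_euler (f : P) : P :=
  (e2 k * f^`M(i2)) *+ 2 + (e4 k * f^`M(i4)) *+ 4 + (e6 k * f^`M(i6)) *+ 6.

Definition discr : P := e4 k ^+ 3 - e6 k ^+ 2.

Lemma ramanujan12_is_linear : linear ramanujan12.
Proof. by move=> c f g; rewrite /ramanujan12 !linearP /= -!mul_mpolyC; ring. Qed.

HB.instance Definition _ :=
  GRing.isLinear.Build k P P _ ramanujan12 ramanujan12_is_linear.

Lemma ramanujan12M f g : ramanujan12 (f * g) = ramanujan12 f * g + f * ramanujan12 g.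
Proof. by rewrite /ramanujan12 !mderivM; ring. Qed.

Lemma ramanujan12C c : ramanujan12 c%:MP = 0.
Proof. by rewrite /ramanujan12 !mderivC; ring. Qed.

Lemma ramanujanE f : (6%:R : k) != 0 -> ramanujan f = 12%:R^-1 *: ramanujan12 f.
Proof.
move=> six_neq0; have [two_neq0 three_neq0] : (2%:R : k) != 0 /\ (3%:R : k) != 0.
  by apply/andP; rewrite -negb_or -mulf_eq0 -natrM.
have twelve_neq0 : (12%:R : k) != 0 by rewrite (natrM _ 2 6) mulf_neq0.
have inv3 : (3%:R : k)^-1 = 12%:R^-1 * 4%:R by field; apply/andP.
have inv2 : (2%:R : k)^-1 = 12%:R^-1 * 6%:R by field; apply/andP.
rewrite /ramanujan /ramanujan12 inv3 inv2 -!mul_mpolyC !mpolyCM !mpolyC_nat; ring.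
Qed.

Lemma mderiv_e2_ramanujan12 f :
  (ramanujan12 f)^`M(i2) = ramanujan12 f^`M(i2) + weighted_euler f.
Proof.
rewrite /ramanujan12 /weighted_euler /e2 /e4 /e6 !expr2.
rewrite !(mderivMn, mderivD, mderivN, mderivM, mderivXU1, mderivXU0) //.
by rewrite (mderiv_comm i4 i2) (mderiv_comm i6 i2); ring.
Qed.

Lemma weighted_euler_ramanujan12 f :
  weighted_euler (ramanujan12 f) = ramanujan12 (weighted_euler f) + ramanujan12 f *+ 2.
Proof.
rewrite /ramanujan12 /weighted_euler /e2 /e4 /e6 !expr2.
rewrite !(mderivMn, mderivD, mderivN, mderivM, mderivXU1, mderivXU0) //.
by rewrite (mderiv_comm i4 i2) (mderiv_comm i6 i2) (mderiv_comm i6 i4); ring.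
Qed.

(* Cramer's rule: the coefficient matrix of d/de2, [weighted_euler] and
   [ramanujan12] has determinant -24 [discr]. *)
Lemma discr_mderiv_e4 f :
  (discr * f^`M(i4)) *+ 24 =
    (e6 k * (ramanujan12 f - (e2 k ^+ 2 - e4 k) * f^`M(i2))) *+ 6
  - ((e2 k * e6 k - e4 k ^+ 2) * (weighted_euler f - (e2 k * f^`M(i2)) *+ 2)) *+ 6.
Proof. by rewrite /discr /ramanujan12 /weighted_euler; ring. Qed.

Lemma discr_mderiv_e6 f :
  (discr * f^`M(i6)) *+ 24 =
    ((e2 k * e4 k - e6 k) * (weighted_euler f - (e2 k * f^`M(i2)) *+ 2)) *+ 4
  - (e4 k * (ramanujan12 f - (e2 k ^+ 2 - e4 k) * f^`M(i2))) *+ 4.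
Proof. by rewrite /discr /ramanujan12 /weighted_euler; ring. Qed.

Lemma dhomog_mnmwgtX (i : 'I_3) : ('X_i : P) \is i.+1.-homog for mnmwgt.
Proof. by rewrite dhomogX /= mnmwgt1. Qed.

Lemma ramanujan12_dhomog d f :
  f \is d.-homog for mnmwgt -> ramanujan12 f \is d.+1.-homog for mnmwgt.
Proof.
move=> f_homog; have h2 := dhomog_mnmwgtX i2; have h4 := dhomog_mnmwgtX i4.
have h6 := dhomog_mnmwgtX i6.
rewrite -[d.+1]add1n; apply: rpredD; [apply: rpredD|]; rewrite 1?rpredMn //;
  apply: dhomogM_mderiv f_homog; rewrite /= mnmwgt1 /=; apply: rpredB.
- by rewrite expr2 (dhomogM h2 h2).
- exact: h4.
- exact: (dhomogM h2 h4).
- exact: h6.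
- exact: (dhomogM h2 h6).
- by rewrite expr2 (dhomogM h4 h4).
Qed.

Lemma ramanujan12_e2 : ramanujan12 (e2 k) = e2 k ^+ 2 - e4 k.
Proof. by rewrite /ramanujan12 /e2 !(mderivXU1, mderivXU0) //; ring. Qed.

Lemma ramanujan12_e4 : ramanujan12 (e4 k) = (e2 k * e4 k - e6 k) *+ 4.
Proof. by rewrite /ramanujan12 /e4 !(mderivXU1, mderivXU0) //; ring. Qed.

Lemma ramanujan12_e6 : ramanujan12 (e6 k) = (e2 k * e6 k - e4 k ^+ 2) *+ 6.
Proof. by rewrite /ramanujan12 /e6 !(mderivXU1, mderivXU0) //; ring. Qed.

Lemma ramanujan12D f g : ramanujan12 (f + g) = ramanujan12 f + ramanujan12 g.
Proof. exact: raddfD. Qed.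

(* (1, 1, 1) is a zero of [ramanujan12], and (1, -10, 21) is a left eigenvector
   of its linear part there, with eigenvalue 12. *)
Definition tangent_form (f : P) : k :=
  (f^`M(i2)).@[fun=> 1] - 10%:R * (f^`M(i4)).@[fun=> 1] + 21%:R * (f^`M(i6)).@[fun=> 1].

Lemma tangent_formD f g : tangent_form (f + g) = tangent_form f + tangent_form g.
Proof. by rewrite /tangent_form !mderivD !mevalD; ring. Qed.

Lemma tangent_formM f g :
  tangent_form (f * g) = tangent_form f * g.@[fun=> 1] + f.@[fun=> 1] * tangent_form g.
Proof. by rewrite /tangent_form !mderivM !mevalD !mevalM; ring. Qed.

Lemma meval1_ramanujan12 f : (ramanujan12 f).@[fun=> 1] = 0.
Proof.
by rewrite /ramanujan12 /e2 /e4 /e6 !(mevalD, mevalN, mevalMn, mevalM, mevalXU); ring.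
Qed.

Lemma tangent_form_ramanujan12 f : tangent_form (ramanujan12 f) = 12%:R * tangent_form f.
Proof.
elim/mpoly_ind_ring: f => [c|i|f g Lf Lg|f g Lf Lg].
- by rewrite ramanujan12C /tangent_form !mderivC meval0; ring.
- case: (ord3P i) => ->.
  + rewrite -/(e2 k) ramanujan12_e2 /tangent_form /e2 /e4 expr2.
    rewrite !(mderivB, mderivM, mderivXU1, mderivXU0) //.
    by rewrite !(mevalB, mevalD, mevalM, mevalXU, meval0, meval1); ring.
  + rewrite -/(e4 k) ramanujan12_e4 /tangent_form /e2 /e4 /e6.
    rewrite !(mderivMn, mderivB, mderivM, mderivXU1, mderivXU0) //.
    by rewrite !(mevalMn, mevalB, mevalD, mevalM, mevalXU, meval0, meval1); ring.
  + rewrite -/(e6 k) ramanujan12_e6 /tangent_form /e2 /e4 /e6 expr2.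
    rewrite !(mderivMn, mderivB, mderivM, mderivXU1, mderivXU0) //.
    by rewrite !(mevalMn, mevalB, mevalD, mevalM, mevalXU, meval0, meval1); ring.
- by rewrite ramanujan12D tangent_formD Lf Lg tangent_formD -mulrDr.
- rewrite ramanujan12M tangent_formD (tangent_formM (ramanujan12 f)).
  rewrite (tangent_formM f (ramanujan12 g)) (tangent_formM f g) Lf Lg.
  by rewrite !meval1_ramanujan12; ring.
Qed.

Lemma tangent_form_iter_ramanujan12 n f :
  tangent_form (iter n ramanujan12 f) = 12%:R ^+ n * tangent_form f.
Proof.
by elim: n => [|n IH]; rewrite ?mul1r //= tangent_form_ramanujan12 IH mulrA -exprS.
Qed.

Lemma tangent_form_e2 : tangent_form (e2 k) = 1.
Proof.
rewrite /tangent_form /e2 mderivXU1 !mderivXU0 // meval1 meval0; ring.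
Qed.

Lemma ramanujan_powE n f :
  (6%:R : k) != 0 -> ramanujan_pow n f = 12%:R^-1 ^+ n *: iter n ramanujan12 f.
Proof.
move=> six_neq0; elim: n => [|n IH]; first by rewrite scale1r.
rewrite /ramanujan_pow iterS -/(ramanujan_pow n f) ramanujanE // IH.
by rewrite linearZ scalerA -exprS.
Qed.

End Ramanujan12.

Lemma cusp_param (F : fieldType) (a b : F) :
  a ^+ 3 = b ^+ 2 -> exists t, t ^+ 2 = a /\ t ^+ 3 = b.
Proof.
move=> ab; have [a0|a_neq0] := eqVneq a 0.
  exists 0; rewrite a0 !expr0n /=; split => //.
  by apply/esym/eqP; rewrite -[b == 0](expf_eq0 b 2) -ab a0 expr0n.
have t2 : (b / a) ^+ 2 = a by rewrite expr_div_n -ab; field.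
by exists (b / a); split; rewrite // exprS t2; field.
Qed.

Section CuspParametrization.
Variable k : fieldType.
Local Notation P := {mpoly k[3]}.
Local Notation s := ('X_i2 : P).
Local Notation t := ('X_i4 : P).

(* The shift e2 = s + t makes the transported field diagonal on the monomials
   t^j s^m. *)
Definition cusp_subst : 3.-tuple P := [tuple s + t; t ^+ 2; t ^+ 3].

Definition cusp_field (g : P) : P := s ^+ 2 * g^`M(i2) + (t * s * g^`M(i4)) *+ 2.

Lemma cusp_field_is_linear : linear cusp_field.
Proof. by move=> c f g; rewrite /cusp_field !linearP /= -!mul_mpolyC; ring. Qed.

HB.instance Definition _ :=
  GRing.isLinear.Build k P P _ cusp_field cusp_field_is_linear.

Lemma cusp_fieldM f g : cusp_field (f * g) = cusp_field f * g + f * cusp_field g.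
Proof. by rewrite /cusp_field !mderivM; ring. Qed.

Lemma comp_cusp_ramanujan12 f :
  ramanujan12 k f \mPo cusp_subst = cusp_field (f \mPo cusp_subst).
Proof.
elim/mpoly_ind_ring: f => [c|i|f g Rf Rg|f g Rf Rg].
- by rewrite ramanujan12C !comp_mpolyC /cusp_field !mderivC; ring.
- rewrite comp_mpolyXU /cusp_field; case: (ord3P i) => ->.
  + rewrite -/(e2 k) ramanujan12_e2 /= rmorphB rmorphXn /= /e2 /e4 !comp_mpolyXU /=.
    by rewrite !(mderivD, mderivXU1, mderivXU0) //; ring.
  + rewrite -/(e4 k) ramanujan12_e4 /= rmorphMn rmorphB rmorphM /= /e2 /e4 /e6.
    rewrite !comp_mpolyXU /=.
    by rewrite !exprS expr0 mulr1 !(mderivM, mderivXU1, mderivXU0) //; ring.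
  + rewrite -/(e6 k) ramanujan12_e6 /= rmorphMn rmorphB rmorphM rmorphXn /= /e2 /e4 /e6.
    rewrite !comp_mpolyXU /= !exprS expr0 mulr1.
    by rewrite !(mderivM, mderivXU1, mderivXU0) //; ring.
- by rewrite ramanujan12D comp_mpolyD Rf Rg comp_mpolyD -raddfD.
- by rewrite ramanujan12M rmorphD !rmorphM /= Rf Rg cusp_fieldM.
Qed.

Lemma cusp_field_monomial j m :
  cusp_field (t ^+ j * s ^+ m) = t ^+ j * s ^+ m.+1 *+ (2 * j + m).
Proof.
have ts : (t ^+ j)^`M(i2) = 0 by rewrite mderiv_exp mderivXU0 // mul0r mul0rn.
have st : (s ^+ m)^`M(i4) = 0 by rewrite mderiv_exp mderivXU0 // mul0r mul0rn.
have ss : s * (s ^+ m)^`M(i2) = s ^+ m *+ m by rewrite mulr_mderiv_exp mderivXU1 mul1r.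
have tt : t * (t ^+ j)^`M(i4) = t ^+ j *+ j by rewrite mulr_mderiv_exp mderivXU1 mul1r.
rewrite /cusp_field !mderivM ts st mul0r mulr0 addr0 add0r.
have -> : s ^+ 2 * (t ^+ j * (s ^+ m)^`M(i2)) = t ^+ j * s * (s * (s ^+ m)^`M(i2)).
  by ring.
have -> : (t * s * ((t ^+ j)^`M(i4) * s ^+ m)) *+ 2 =
    (s * s ^+ m * (t * (t ^+ j)^`M(i4))) *+ 2.
  by ring.
by rewrite ss tt exprS; ring.
Qed.

Lemma iter_cusp_field_monomial n j m :
  iter n cusp_field (t ^+ j * s ^+ m) =
  t ^+ j * s ^+ (m + n) *+ \prod_(l < n) (2 * j + m + l).
Proof.
elim: n => [|n IH]; first by rewrite addn0 big_ord0.
rewrite iterS IH raddfMn /= cusp_field_monomial -mulrnA big_ord_recr /= mulnC.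
by rewrite addnS addnA.
Qed.

Lemma comp_cusp_iter_ramanujan12 n f :
  iter n (ramanujan12 k) f \mPo cusp_subst = iter n cusp_field (f \mPo cusp_subst).
Proof. by elim: n => //= n <-; apply: comp_cusp_ramanujan12. Qed.

End CuspParametrization.

(** * Characteristic p *)

Section PositiveCharacteristic.
Variables (k : fieldType) (p : nat).
Hypotheses (pcharkp : p \in [pchar k]) (p_ge5 : (5 <= p)%N).
Local Notation P := {mpoly k[3]}.
Local Notation R12 := (ramanujan12 k).

Lemma p_prime : prime p. Proof. exact: pcharf_prime pcharkp. Qed.

Lemma natr_neq0_lt_pchar n : (0 < n < p)%N -> (n%:R : k) != 0.
Proof.
case/andP=> n_gt0 n_lt; rewrite -(dvdn_pcharf pcharkp).
by apply/negP => /(dvdn_leq n_gt0); rewrite leqNgt n_lt.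
Qed.

Lemma natr_2a3b_neq0 a b : ((2 ^ a * 3 ^ b)%:R : k) != 0.
Proof.
have two_neq0 : (2%:R : k) != 0 by rewrite natr_neq0_lt_pchar // (leq_trans _ p_ge5).
have three_neq0 : (3%:R : k) != 0 by rewrite natr_neq0_lt_pchar // (leq_trans _ p_ge5).
by rewrite natrM !natrX mulf_neq0 // expf_neq0.
Qed.

Lemma pchar_mpoly : p \in [pchar P].
Proof. by rewrite inE p_prime -mpolyC_nat (pcharf0 pcharkp) mpolyC0 /=. Qed.

Lemma iter_ramanujan12M f g :
  iter p R12 (f * g) = iter p R12 f * g + f * iter p R12 g.
Proof. exact: (pchar_iter_derivationM _ _ (ramanujan12M k) _ _ _ pchar_mpoly). Qed.

Lemma iter_ramanujan12C n c : (0 < n)%N -> iter n R12 c%:MP = 0.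
Proof. by case: n => // n _; rewrite iterSr ramanujan12C raddf0. Qed.

Definition rp_coef (i : 'I_3) : P := iter p R12 'X_i.

Lemma iter_ramanujan12E f : iter p R12 f = \sum_i f^`M(i) * rp_coef i.
Proof.
apply: derivation_mpolyE; first exact: iter_ramanujan12M.
by move=> c; apply: iter_ramanujan12C; rewrite prime_gt0 // p_prime.
Qed.

Lemma mderiv_e2_iter_ramanujan12 f : (iter p R12 f)^`M(i2) = iter p R12 f^`M(i2).
Proof.
apply: (pchar_iter_commute _ _ _ _ 2 (mderiv_e2_ramanujan12 k)
                              (weighted_euler_ramanujan12 k)).
- exact: p_prime.
- exact: leq_trans p_ge5.
- by move=> g; rewrite mulrn_pchar // pchar_mpoly.
Qed.

Lemma mderiv_e2_rp_coef i : (rp_coef i)^`M(i2) = 0.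
Proof.
rewrite mderiv_e2_iter_ramanujan12; have [->|ne] := eqVneq i i2.
  by rewrite mderivXU1 -mpolyC1 iter_ramanujan12C // prime_gt0 // p_prime.
by rewrite mderivXU0 // raddf0.
Qed.

Lemma rp_coef_dhomog i : rp_coef i \is (i.+1 + p)%N.-homog for mnmwgt.
Proof.
rewrite /rp_coef; elim: p => [|n IH]; first by rewrite addn0 dhomog_mnmwgtX.
by rewrite addnS; apply: ramanujan12_dhomog.
Qed.

Local Notation in_I := (in_ideal3 (rp_coef i2) (rp_coef i4) (rp_coef i6)).

Lemma in_I_iter_ramanujan12 f : in_I (iter p R12 f).
Proof.
exists (f^`M(i2)), (f^`M(i4)), (f^`M(i6)).
by rewrite iter_ramanujan12E big_ord3.
Qed.

Lemma in_I_ramanujan12 f : in_I f -> in_I (R12 f).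
Proof.
by apply: in_ideal3_derivation (ramanujan12M k) _ _ _;
  rewrite /rp_coef -iterS iterSr; apply: in_I_iter_ramanujan12.
Qed.

Lemma in_I_mderiv_e2 f : in_I f -> in_I f^`M(i2).
Proof.
apply: in_ideal3_derivation (mderivM i2) _ _ _;
  by rewrite /= mderiv_e2_rp_coef; apply: in_ideal3_0.
Qed.

Lemma in_I_weighted_euler f : in_I f -> in_I (weighted_euler k f).
Proof.
move=> If; have -> : weighted_euler k f = (R12 f)^`M(i2) - R12 f^`M(i2).
  by rewrite mderiv_e2_ramanujan12 addrC addKr.
apply: in_ideal3B; first exact/in_I_mderiv_e2/in_I_ramanujan12.
exact/in_I_ramanujan12/in_I_mderiv_e2.
Qed.

Lemma in_I_Mn_inv f n : (n%:R : k) != 0 -> in_I (f *+ n) -> in_I f.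
Proof.
move=> n_neq0 Ifn; rewrite -[f]mul1r -mpolyC1 -(mulVf n_neq0) mpolyCM mpolyC_nat.
by rewrite -mulrA mulr_natl; apply: in_ideal3Ml.
Qed.

Lemma in_I_discr_mderiv i f : in_I f -> in_I (discr k * f^`M(i)).
Proof.
move=> If; have If2 := in_I_mderiv_e2 _ If.
have IR : in_I (R12 f - (e2 k ^+ 2 - e4 k) * f^`M(i2)).
  by apply: in_ideal3B; [apply: in_I_ramanujan12 | apply: in_ideal3Ml].
have IH : in_I (weighted_euler k f - (e2 k * f^`M(i2)) *+ 2).
  by apply: in_ideal3B; [apply: in_I_weighted_euler | apply/in_ideal3Mn/in_ideal3Ml].
have [->|->|->] := ord3P i; first exact: in_ideal3Ml.
all: apply: (in_I_Mn_inv _ _ (natr_2a3b_neq0 3 1)).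
  by rewrite discr_mderiv_e4; apply: in_ideal3B; apply/in_ideal3Mn/in_ideal3Ml.
by rewrite discr_mderiv_e6; apply: in_ideal3B; apply/in_ideal3Mn/in_ideal3Ml.
Qed.

Definition in_discr_saturation f := exists N, in_I (discr k ^+ N * f).

Lemma in_discr_saturation_mderiv i f :
  in_discr_saturation f -> in_discr_saturation f^`M(i).
Proof.
case=> N IN; exists N.+1.
have -> : discr k ^+ N.+1 * f^`M(i) =
    discr k * (discr k ^+ N * f)^`M(i) - ((discr k)^`M(i) *+ N) * (discr k ^+ N * f).
  by rewrite mderivM mulrDr [discr k * (_ * f)]mulrA mulr_mderiv_exp exprS; ring.
by apply: in_ideal3B; [apply: in_I_discr_mderiv | apply: in_ideal3Ml].
Qed.

Lemma in_discr_saturation_mderivm m f :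
  in_discr_saturation f -> in_discr_saturation f^`M[m].
Proof.
move=> Sf; rewrite mderivm_foldr.
by elim: (flatten _) => [|i s IH] //=; apply: in_discr_saturation_mderiv.
Qed.

Lemma rp_coef_e2_neq0 : rp_coef i2 != 0.
Proof.
have n12_neq0 : (12%:R : k) != 0 by apply: (natr_2a3b_neq0 2 1).
apply: contra_neq (expf_neq0 p n12_neq0) => E0.
have := tangent_form_iter_ramanujan12 k p (e2 k); rewrite tangent_form_e2 mulr1 => <-.
by rewrite -/(rp_coef i2) E0 /tangent_form !mderiv0 meval0; ring.
Qed.

Lemma mlead_rp_coef_e2_lt j : (mlead (rp_coef i2) j < p)%N.
Proof.
have a_supp := mlead_supp rp_coef_e2_neq0; set a := mlead _ in a_supp *.
have /dhomogP/(_ a a_supp) := rp_coef_dhomog i2; rewrite /= mnmwgt3 => wt.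
have := pchar_dvdn_mderiv_eq0 pcharkp (mderiv_e2_rp_coef i2) a_supp.
case/dvdnP=> q aq; case: (ord3P j) => ->; try lia.
case: q aq => [|[|q]] aq; lia.
Qed.

Lemma discr_meval_eq0 (x : 'I_3 -> k) :
  (forall i, (rp_coef i).@[x] = 0) -> (discr k).@[x] = 0.
Proof.
move=> Ex; set E := rp_coef i2.
have [N IN] : in_discr_saturation E^`M[mlead E].
  apply: in_discr_saturation_mderivm; exists 0%N; rewrite expr0 mul1r.
  by case: (@in_ideal3_gen _ E (rp_coef i4) (rp_coef i6)).
have /eqP := in_ideal3_rmorph_eq0 (meval x) (Ex i2) (Ex i4) (Ex i6) IN.
rewrite mderivm_mlead rmorphM /= mevalC rmorphXn mulf_eq0 expf_eq0.
rewrite (negPf (pchar_mleadc_fact_neq0 pcharkp rp_coef_e2_neq0 mlead_rp_coef_e2_lt)) orbF.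
by case/andP=> _ /eqP.
Qed.

Lemma iter_cusp_field_monomial_pchar j m :
  iter p (cusp_field k) ('X_i4 ^+ j * 'X_i2 ^+ m) = 0.
Proof.
rewrite iter_cusp_field_monomial -mulr_natr -mpolyC_nat.
have /dvdnP[q ->] := dvdn_prod_consecutive p (2 * j + m) (prime_gt0 p_prime).
by rewrite natrM (pcharf0 pcharkp) mulr0 mpolyC0 mulr0.
Qed.

Lemma comp_cusp_rp_coef i : rp_coef i \mPo cusp_subst k = 0.
Proof.
rewrite comp_cusp_iter_ramanujan12 comp_mpolyXU.
have [->|->|->] := ord3P i; rewrite /=.
- have -> : 'X_i2 + 'X_i4 = 'X_i4 ^+ 0 * 'X_i2 ^+ 1 + 'X_i4 ^+ 1 * 'X_i2 ^+ 0 :> P.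
    by rewrite mul1r mulr1.
  by rewrite raddfD /= !iter_cusp_field_monomial_pchar addr0.
- by rewrite -[_ ^+ 2]mulr1 -(expr0 'X_i2) iter_cusp_field_monomial_pchar.
- by rewrite -[_ ^+ 3]mulr1 -(expr0 'X_i2) iter_cusp_field_monomial_pchar.
Qed.

Lemma rp_coef_meval_eq0 (x : 'I_3 -> k) :
  x i4 ^+ 3 = x i6 ^+ 2 -> forall i, (rp_coef i).@[x] = 0.
Proof.
move=> /cusp_param[t0 [t02 t03]] i.
pose w j : k := if j == i2 then x i2 - t0 else t0.
suff -> : (rp_coef i).@[x] = (rp_coef i \mPo cusp_subst k).@[w].
  by rewrite comp_cusp_rp_coef meval0.
rewrite comp_mpoly_meval; apply: meval_eq => j.
have [->|->|->] := ord3P j;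
  by rewrite (tnth_nth 0) /= ?mevalD ?rmorphXn /= !mevalXU /w /= ?subrK.
Qed.

End PositiveCharacteristic.

Theorem corollary2p6 (k : closedFieldType) (p : nat)
  (hp : p \in [pchar k]) (hp5 : (5 <= p)%N) (x : 'I_3 -> k) :
  [/\ (ramanujan_pow p (e2 k)).@[x] = 0,
      (ramanujan_pow p (e4 k)).@[x] = 0 &
      (ramanujan_pow p (e6 k)).@[x] = 0]
  <-> x i4 ^+ 3 - x i6 ^+ 2 = 0.
Proof.
have six_neq0 : (6%:R : k) != 0 := natr_2a3b_neq0 k p hp hp5 1 1.
have n12_neq0 : (12%:R : k) != 0 := natr_2a3b_neq0 k p hp hp5 2 1.
have ramanujan_pow_eq0 i : (ramanujan_pow p 'X_i).@[x] = 0 <-> (rp_coef k p i).@[x] = 0.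
  rewrite ramanujan_powE // mevalZ; split => [/eqP|->]; last by rewrite mulr0.
  by rewrite mulf_eq0 expf_eq0 invr_eq0 (negPf n12_neq0) andbF => /eqP.
have discrE : (discr k).@[x] = x i4 ^+ 3 - x i6 ^+ 2.
  by rewrite /discr mevalB !rmorphXn /= !mevalXU.
rewrite -discrE; split => [[E2 E4 E6]|/eqP].
- apply: (discr_meval_eq0 k p hp hp5) => i; apply/ramanujan_pow_eq0.
  by case: (ord3P i) => ->.
- rewrite discrE subr_eq0 => /eqP/(rp_coef_meval_eq0 k p hp x) E.
  by split; apply/ramanujan_pow_eq0.
Qed.
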